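(* Let $m,c$ be positive integers, and let $T_n$ denote the number of $(c,m)$-colored $B_n$-partitions. Let $\xi_n$ be the number of non-zero-blocks of a $(c,m)$-colored $B_n$-partition chosen uniformly at random. Then its expectation $E_n$ and variance $V_n$ satisfy \[ E_n=\frac{T_{n+1}}{mT_n}-\frac{1+c}{m},\qquad V_n=\frac{T_{n+2}}{m^2T_n}-\frac{T_{n+1}^2}{m^2T_n^2}-\frac1m . \]
   Context: Let $n,m,c$ be positive integers, let $C_1$ be a list of $c$ colors and $C_2$ a list of $m$ colors. A $(c,m)$-colored $B_n$-partition is a set partition $\pi$ of $[n]\cup\{0\}$ together with a coloring of the elements of $[n]$ defined as follows. For $x\in[n]\cup\{0\}$ let $b_x$ be the block of $\pi$ containing $x$. The block $b_0$ is called the zero-block, and every other block is a non-zero-block. Each $x\in[n]$ receives a color according to these rules: if $x=\min b_x$, then $x$ gets the first color of $C_2$; if $x\ne\min b_x$ and $x\in b_0$, then $x$ gets an arbitrary color from $C_1$; if $x\ne \min b_x$ and $x\notin b_0$, then $x$ gets an arbitrary color from $C_2$. Two such objects are equal exactly when they have the same underlying partition and the same coloring. *)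

From mathcomp Require Import all_boot all_order all_algebra.
Set Implicit Arguments. Unset Strict Implicit. Unset Printing Implicit Defensive.
Import GRing.Theory Num.Theory.
Local Open Scope ring_scope.

(* The ground set [n] ∪ {0} is 'I_n.+1 (element 0 is ord0).
   Colors: C1 = the c colors inl i (i : 'I_c), C2 = the m colors inr j
   (j : 'I_m); the first color of C2 is inr j with val j = 0. *)
Definition color (c m : nat) := ('I_c + 'I_m)%type.

Definition is_block_min n (P : {set {set 'I_n.+1}}) (x : 'I_n.+1) : bool :=
  [forall y in pblock P x, (x <= y)%N].

(* the coloring rules; applied to every x in 'I_n.+1.  For x = 0 (always the
   minimum of the zero-block) this fixes its (meaningless) color to the first
   color of C2, so that objects correspond bijectively to the paper's. *)
Definition color_ok c m n (P : {set {set 'I_n.+1}}) (x : 'I_n.+1) (k : color c m) : bool :=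
  if is_block_min P x then
    (match k with inr j => (val j == 0)%N | inl _ => false end)
  else if x \in pblock P ord0 then
    (match k with inl _ => true | inr _ => false end)
  else
    (match k with inl _ => false | inr _ => true end).

Definition is_cBP c m n
  (p : {set {set 'I_n.+1}} * {ffun 'I_n.+1 -> color c m}) : bool :=
  partition p.1 [set: 'I_n.+1] && [forall x, color_ok p.1 x (p.2 x)].

Definition cBP c m n := [set p | is_cBP (c:=c) (m:=m) (n:=n) p].

Definition T c m n : nat := #|cBP c m n|.

Definition xi c m n (p : {set {set 'I_n.+1}} * {ffun 'I_n.+1 -> color c m}) : nat :=
  #|[set B in p.1 | ord0 \notin B]|.

Definition E_n c m n : rat :=
  (\sum_(p in cBP c m n) (xi p)%:R) / (T c m n)%:R.

Definition V_n c m n : rat :=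
  (\sum_(p in cBP c m n) ((xi p)%:R - E_n c m n) ^+ 2) / (T c m n)%:R.

(* Encode a colored partition by the map sending each point to the minimum
   of its block together with its color.  A configuration on [n] with k
   non-zero blocks extends to [n+1] in c + m k + 1 ways: the new point joins
   the zero-block (c colors), one of the k non-zero blocks (m colors), or opens
   a new block, and only the last choice raises k.  Hence for every F,
     sum_{B_{n+1}} F(xi) = sum_{B_n} ((c + m xi) F(xi) + F(xi + 1)),
   and F = 1, F = xi express T_{n+1} and T_{n+2} through the moments
   sum xi^k (k = 0, 1, 2) over B_n, from which E_n and V_n are read off. *)

From mathcomp Require Import all_boot all_order all_algebra ring.
Import GRing.Theory Num.Theory.

Set Implicit Arguments.
Unset Strict Implicit.
Unset Printing Implicit Defensive.

Local Open Scope ring_scope.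

Section BlockMin.
Variables (n : nat) (P : {set {set 'I_n.+1}}).
Hypothesis partP : partition P [set: 'I_n.+1].

Definition block_min (x : 'I_n.+1) : 'I_n.+1 :=
  [arg min_(y < x in pblock P x) (y : nat)].

Lemma mem_pblock_self x : x \in pblock P x.
Proof. by case/and3P: partP => /eqP coverP _ _; rewrite mem_pblock coverP inE. Qed.

Lemma block_min_mem x : block_min x \in pblock P x.
Proof. by rewrite /block_min; case: arg_minnP => //; apply: mem_pblock_self. Qed.

Lemma block_min_le_mem x y : y \in pblock P x -> (block_min x <= y)%N.
Proof.
rewrite /block_min; case: arg_minnP => [|r _ minr]; last exact: minr.
exact: mem_pblock_self.
Qed.

Lemma block_min_unique x r : r \in pblock P x ->
  (forall y, y \in pblock P x -> (r <= y)%N) -> block_min x = r.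
Proof.
move=> rx minr; apply/val_inj/eqP.
by rewrite eqn_leq block_min_le_mem // minr // block_min_mem.
Qed.

Lemma same_block_min x y : (y \in pblock P x) = (block_min x == block_min y).
Proof.
have trivP : trivIset P by case/and3P: partP.
apply/idP/eqP => [yx | eq_min].
  apply: block_min_unique; rewrite -(same_pblock trivP yx).
    exact: block_min_mem.
  exact: block_min_le_mem.
rewrite -(same_pblock trivP (block_min_mem x)) eq_min.
by rewrite (same_pblock trivP (block_min_mem y)) mem_pblock_self.
Qed.

Lemma block_min_le x : (block_min x <= x)%N.
Proof. exact/block_min_le_mem/mem_pblock_self. Qed.

Lemma block_min_id x : block_min (block_min x) = block_min x.
Proof. by apply/esym/eqP; rewrite -same_block_min block_min_mem. Qed.

Lemma block_min0 : block_min ord0 = ord0.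
Proof. by apply/val_inj/eqP; rewrite /= -leqn0 block_min_le. Qed.

Lemma is_block_minE x : is_block_min P x = (block_min x == x).
Proof.
apply/forallP/eqP => [minx | minx y].
  by apply: block_min_unique; [apply: mem_pblock_self | move=> y /(implyP (minx y))].
by apply/implyP => /block_min_le_mem; rewrite minx.
Qed.

Lemma mem_pblock0 x : (x \in pblock P ord0) = (block_min x == ord0).
Proof. by rewrite same_block_min block_min0 eq_sym. Qed.

End BlockMin.

Section Encoding.
Variables c m n : nat.
Local Notation rcfun := {ffun 'I_n.+1 -> 'I_n.+1 * color c m}.
Local Notation cpart := ({set {set 'I_n.+1}} * {ffun 'I_n.+1 -> color c m})%type.

(* In
   [rc_valid g] the first component of [g] is idempotent and below the
   identity, so its fibres are the blocks and it picks their minima;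
   [color_rule] is [color_ok] with the block minimum passed explicitly. *)
Definition color_rule (r x : 'I_n.+1) (k : color c m) : bool :=
  if r == x then (if k is inr j then (val j == 0)%N else false)
  else if r == ord0 then (if k is inl _ then true else false)
  else (if k is inr _ then true else false).

Definition rc_valid (g : rcfun) : bool :=
  [forall x, [&& (g (g x).1).1 == (g x).1, ((g x).1 <= x)%N
               & color_rule (g x).1 x (g x).2]].

Definition nonzero_roots (g : rcfun) : nat :=
  #|[set r | (r != ord0) && ((g r).1 == r)]|.

Definition encode (p : cpart) : rcfun := [ffun x => (block_min p.1 x, p.2 x)].

Definition same_root (g : rcfun) : rel 'I_n.+1 := fun x y => (g x).1 == (g y).1.

Definition decode (g : rcfun) : cpart :=
  (equivalence_partition (same_root g) [set: 'I_n.+1], [ffun x => (g x).2]).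

Lemma color_okE P x k : partition P [set: 'I_n.+1] ->
  color_ok P x k = color_rule (block_min P x) x k.
Proof. by move=> partP; rewrite /color_ok /color_rule is_block_minE // mem_pblock0. Qed.

Lemma decode_encode p : p \in cBP c m n -> decode (encode p) = p.
Proof.
case: p => P col; rewrite inE => /andP[/= partP _].
congr pair; last by apply/ffunP => x; rewrite !ffunE.
rewrite -[RHS](equivalence_partition_pblock partP); apply: eq_imset => x.
by apply/setP => y; rewrite !inE /same_root !ffunE same_block_min.
Qed.

Lemma encode_valid p : p \in cBP c m n -> rc_valid (encode p).
Proof.
case: p => P col; rewrite inE => /andP[/= partP /forallP colP].
apply/forallP => x; rewrite !ffunE /= block_min_id // eqxx block_min_le //=.
by rewrite -color_okE.
Qed.

Lemma xi_encode p : p \in cBP c m n -> xi p = nonzero_roots (encode p).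
Proof.
case: p => P col; rewrite inE => /andP[/= partP _].
have /and3P[_ trivP set0P] := partP.
have rootE r : ((encode (P, col) r).1 == r) = (block_min P r == r) by rewrite ffunE.
rewrite /xi /nonzero_roots -(card_in_imset (f := pblock P)); last first.
  move=> r1 r2; rewrite !inE !rootE => /andP[_ /eqP min1] /andP[_ /eqP min2] eqB.
  by apply/eqP; rewrite -min1 -min2 -same_block_min // eqB mem_pblock_self.
congr #|pred_of_set _|; apply/setP => B; rewrite inE.
apply/andP/imsetP => [[BP B0] | [r]].
  have [x xB] : exists x, x \in B.
    by apply/set0Pn; apply: contraNneq set0P => <-.
  have eB := def_pblock trivP BP xB.
  exists (block_min P x); last first.
    by rewrite -eB (same_pblock trivP (block_min_mem partP x)).
  rewrite inE rootE block_min_id // eqxx andbT.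
  by apply: contraNneq B0 => x0; rewrite -eB same_block_min // x0 block_min0.
rewrite inE rootE => /andP[r0 /eqP minr] ->; split.
  by apply: pblock_mem; case/and3P: partP => /eqP ->; rewrite inE.
by rewrite same_block_min // minr block_min0.
Qed.

Lemma same_root_equiv g : {in [set: 'I_n.+1] & &, equivalence_rel (same_root g)}.
Proof. by move=> x y z _ _ _; rewrite /same_root eqxx; split => // /eqP ->. Qed.

Lemma block_min_decode g x : rc_valid g -> block_min (decode g).1 x = (g x).1.
Proof.
move=> /forallP validg.
have partg := equivalence_partitionP (same_root_equiv g).
have blockE y : pblock (decode g).1 y = [set z | same_root g y z].
  apply/setP => z; rewrite pblock_equivalence_partition ?inE //.
  exact: same_root_equiv.
apply: block_min_unique => // [|y]; rewrite blockE inE /same_root.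
  by case/and3P: (validg x) => /eqP ->.
by move=> /eqP ->; case/and3P: (validg y).
Qed.

Lemma decode_valid g : rc_valid g -> decode g \in cBP c m n.
Proof.
move=> validg; have partg := equivalence_partitionP (same_root_equiv g).
rewrite inE; apply/andP; split => //; apply/forallP => x.
rewrite color_okE // block_min_decode // ffunE.
by case/forallP/(_ x)/and3P: validg.
Qed.

Lemma encode_decode g : rc_valid g -> encode (decode g) = g.
Proof.
move=> validg; apply/ffunP => x.
by rewrite ffunE block_min_decode // ffunE -surjective_pairing.
Qed.

Lemma sum_cBP_encode (R : nmodType) (F : nat -> R) :
  \sum_(p in cBP c m n) F (xi p) = \sum_(g | rc_valid g) F (nonzero_roots g).
Proof.
rewrite (reindex_onto decode encode decode_encode); apply: eq_big => g.
  apply/andP/idP => [[pP /eqP <-] | validg]; first exact: encode_valid.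
  by rewrite decode_valid // encode_decode.
by case/andP => pP /eqP eq_g; rewrite xi_encode // eq_g.
Qed.

End Encoding.

Lemma sum_color_rule {c m n : nat} (m_gt0 : (0 < m)%N) (R : nmodType)
    (r x : 'I_n.+1) (X : R) :
  \sum_(k : color c m | color_rule r x k) X
    = X *+ (if r == x then 1 else if r == ord0 then c else m).
Proof.
rewrite big_sumType /= /color_rule.
case: (r =P x) => _.
  by rewrite big_pred0 // add0r (big_pred1 (Ordinal m_gt0)).
case: (r =P ord0) => _.
  by rewrite [X in _ + X]big_pred0 // addr0 sumr_const card_ord.
by rewrite big_pred0 // add0r sumr_const card_ord.
Qed.

Section Extension.
Variables c m n : nat.
Hypothesis m_gt0 : (0 < m)%N.
Local Notation rcfun := {ffun 'I_n.+1 -> 'I_n.+1 * color c m}.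
Local Notation rcfun' := {ffun 'I_n.+2 -> 'I_n.+2 * color c m}.

Definition extend (a : rcfun * ('I_n.+2 * color c m)) : rcfun' :=
  [ffun i => if unlift ord_max i is Some j
             then (lift ord_max (a.1 j).1, (a.1 j).2) else a.2].

Definition restrict (q : rcfun') : rcfun * ('I_n.+2 * color c m) :=
  ([ffun j => (inord (q (lift ord_max j)).1, (q (lift ord_max j)).2)], q ord_max).

(* The new point may join the block with root [v] only if [v] is a root of
   [g], or start its own block ([v = ord_max]). *)
Definition new_point_ok (g : rcfun) (v : 'I_n.+2) (k : color c m) : bool :=
  color_rule v ord_max k && (if unlift ord_max v is Some r then (g r).1 == r else true).

Lemma lift_max_eq0 (r : 'I_n.+1) : (lift ord_max r == ord0) = (r == ord0).
Proof. by rewrite -!val_eqE; congr (_ == _); exact: lift_max. Qed.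

Lemma restrict_extend : cancel extend restrict.
Proof.
case=> g b; congr pair; last by rewrite ffunE unlift_none.
apply/ffunP => j; rewrite !ffunE liftK.
by apply: injective_projections => //; apply: ord_inj; rewrite inordK lift_max.
Qed.

Lemma extend_restrict q : rc_valid q -> extend (restrict q) = q.
Proof.
move/forallP => validq; apply/ffunP => i; rewrite ffunE.
case: unliftP => [j ->|->] //=; rewrite ffunE.
apply: injective_projections => //=; apply: ord_inj; rewrite lift_max inordK //.
case/and3P: (validq (lift ord_max j)) => _ le_root _.
by apply: leq_ltn_trans le_root _; rewrite (lift_max j).
Qed.

Lemma color_rule_lift (r x : 'I_n.+1) (k : color c m) :
  color_rule (lift ord_max r) (lift ord_max x) k = color_rule r x k.
Proof. by rewrite /color_rule (inj_eq (@lift_inj _ _)) lift_max_eq0. Qed.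

Lemma forall_ord_max (P : pred 'I_n.+2) :
  [forall i, P i] = P ord_max && [forall j, P (lift ord_max j)].
Proof.
apply/forallP/andP => [Pall | [Pmax /forallP Plift] i].
  by split; [|apply/forallP].
by case: (unliftP ord_max i) => [j ->|->].
Qed.

Lemma rc_valid_extend g v k :
  rc_valid (extend (g, (v, k))) = rc_valid g && new_point_ok g v k.
Proof.
have ext_max : extend (g, (v, k)) ord_max = (v, k) by rewrite ffunE unlift_none.
have ext_lift j : extend (g, (v, k)) (lift ord_max j) = (lift ord_max (g j).1, (g j).2).
  by rewrite ffunE liftK.
rewrite /rc_valid forall_ord_max andbC; congr andb.
  apply: eq_forallb => j; rewrite !ext_lift (inj_eq (@lift_inj _ _)).
  by rewrite !lift_max color_rule_lift.
rewrite ext_max /= leq_ord /new_point_ok andbC.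
move: ext_lift ext_max; case: unliftP => [r ->|->] ext_lift ext_max.
  by rewrite ext_lift (inj_eq (@lift_inj _ _)).
by rewrite ext_max eqxx.
Qed.

Lemma nonzero_roots_extend g v k :
  nonzero_roots (extend (g, (v, k))) = (nonzero_roots g + (v == ord_max))%N.
Proof.
rewrite /nonzero_roots (cardsD1 ord_max) inE ffunE unlift_none /= addnC.
congr addn; rewrite -[RHS](card_imset _ (@lift_inj _ ord_max)); apply: eq_card => i.
rewrite !inE; case: (unliftP ord_max i) => [j ->|->].
  rewrite mem_imset; last exact: lift_inj.
  by rewrite inE lift_eqF ffunE liftK lift_max_eq0 (inj_eq (@lift_inj _ _)).
by rewrite eqxx; apply/esym/imsetP => -[j _ /eqP]; rewrite eq_sym lift_eqF.
Qed.

Lemma sum_new_point (R : nmodType) g (X Y : R) : rc_valid g ->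
  \sum_(a | new_point_ok g a.1 a.2) (if a.1 == ord_max then Y else X)
    = X *+ (c + m * nonzero_roots g) + Y.
Proof.
move=> /forallP validg.
have root0 : (g ord0).1 == ord0.
  case/and3P: (validg ord0) => _; rewrite leqn0 => /eqP root0 _.
  exact/eqP/ord_inj.
transitivity (\sum_v \sum_(k | new_point_ok g v k) (if v == ord_max then Y else X)).
  by rewrite pair_big_dep.
rewrite (bigD1_ord ord_max) //= addrC /new_point_ok unlift_none.
congr (_ + _); last first.
  by rewrite eqxx (eq_bigl _ _ (fun k => andbT _)) (sum_color_rule m_gt0) eqxx.
transitivity (\sum_(i < n.+1 | (g i).1 == i) X *+ (if i == ord0 then c else m)).
  rewrite [RHS]big_mkcond; apply: eq_bigr => i _; rewrite liftK lift_eqF.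
  case: ifP => _; last by rewrite big_pred0 // => k; rewrite andbF.
  rewrite (eq_bigl _ _ (fun k => andbT _)) (sum_color_rule m_gt0).
  by rewrite lift_eqF lift_max_eq0.
rewrite (bigD1 ord0) //= mulrnDr; congr (_ + _).
rewrite (eq_bigl (fun r => r \in [set r | (r != ord0) && ((g r).1 == r)])); last first.
  by move=> r; rewrite inE andbC.
rewrite (eq_bigr (fun => X *+ m)) ?sumr_const -?mulrnA //.
by move=> r /[!inE] /andP[/negbTE ->].
Qed.

Lemma sum_rc_valid_succ (R : nmodType) (F : nat -> R) :
  \sum_(q : rcfun' | rc_valid q) F (nonzero_roots q)
    = \sum_(g : rcfun | rc_valid g)
        (F (nonzero_roots g) *+ (c + m * nonzero_roots g) + F (nonzero_roots g).+1).
Proof.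
rewrite (reindex_onto extend restrict extend_restrict).
rewrite (eq_bigl (fun a => rc_valid a.1 && new_point_ok a.1 a.2.1 a.2.2)); last first.
  by case=> g [v k]; rewrite restrict_extend eqxx andbT rc_valid_extend.
rewrite -(pair_big_dep (@rc_valid c m n) (fun g a => new_point_ok g a.1 a.2)
           (fun g a => F (nonzero_roots (extend (g, a))))) /=.
apply: eq_bigr => g validg; rewrite -sum_new_point //; apply: eq_bigr => -[v k] _.
by rewrite nonzero_roots_extend /=; case: (v == ord_max); rewrite ?addn0 ?addn1.
Qed.

End Extension.

Lemma sum_cBP_succ {c m : nat} (n : nat) (m_gt0 : (0 < m)%N)
    (R : nmodType) (F : nat -> R) :
  \sum_(p in cBP c m n.+1) F (xi p)
    = \sum_(p in cBP c m n) (F (xi p) *+ (c + m * xi p) + F (xi p).+1).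
Proof.
rewrite (sum_cBP_encode c m n (fun k => F k *+ (c + m * k) + F k.+1)).
by rewrite sum_cBP_encode sum_rc_valid_succ.
Qed.

Lemma T_gt0 c m n : (0 < m)%N -> (0 < T c m n)%N.
Proof.
move=> m_gt0; apply/card_gt0P.
pose g : {ffun 'I_n.+1 -> 'I_n.+1 * color c m} :=
  [ffun x => (x, inr (Ordinal m_gt0))].
exists (decode g); apply: decode_valid.
by apply/forallP => x; rewrite !ffunE /= eqxx leqnn /color_rule eqxx.
Qed.

Lemma sumr_sqrB (R : comRingType) (I : finType) (A : {pred I}) (f : I -> R) (a : R) :
  \sum_(i in A) (f i - a) ^+ 2
    = \sum_(i in A) f i ^+ 2 - a * (\sum_(i in A) f i) *+ 2 + a ^+ 2 *+ #|A|.
Proof.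
under eq_bigr do rewrite sqrrB mulrC.
by rewrite big_split sumrB /= sumrMnl mulr_sumr sumr_const.
Qed.

Definition moment c m n k : rat := \sum_(p in cBP c m n) (xi p)%:R ^+ k.

Section Moments.
Variables (c m n : nat).
Hypothesis m_gt0 : (0 < m)%N.
Local Notation M := (moment c m).

Lemma T_moment0 : (T c m n)%:R = M n 0.
Proof. by rewrite /moment (eq_bigr (fun => 1)) ?sumr_const // => p; rewrite expr0. Qed.

Lemma moment_succ0 : M n.+1 0 = (c%:R + 1) * M n 0 + m%:R * M n 1.
Proof.
rewrite /moment (sum_cBP_succ n m_gt0 (fun k => k%:R ^+ 0)) !mulr_sumr -big_split.
by apply: eq_bigr => p _; rewrite /= !expr0 expr1 -mulr_natr; ring.
Qed.

Lemma moment_succ1 : M n.+1 1 = (c%:R + 1) * M n 1 + m%:R * M n 2 + M n 0.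
Proof.
rewrite /moment (sum_cBP_succ n m_gt0 (fun k => k%:R ^+ 1)) !mulr_sumr -!big_split.
by apply: eq_bigr => p _; rewrite /= !expr0 !expr1 -mulr_natr; ring.
Qed.

Lemma moment1 : M n 1 = \sum_(p in cBP c m n) (xi p)%:R.
Proof. by apply: eq_bigr => p _; rewrite expr1. Qed.

Lemma E_n_moments : E_n c m n = M n 1 / M n 0.
Proof. by rewrite /E_n T_moment0 moment1. Qed.

Lemma V_n_moments :
  V_n c m n = (M n 2 - E_n c m n * M n 1 *+ 2 + E_n c m n ^+ 2 * M n 0) / M n 0.
Proof. by rewrite /V_n sumr_sqrB -T_moment0 mulr_natr -moment1. Qed.

End Moments.

Theorem theorem3 (c m n : nat) (hc : (0 < c)%N) (hm : (0 < m)%N) (hn : (0 < n)%N) :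
  E_n c m n = (T c m n.+1)%:R / (m%:R * (T c m n)%:R) - (1 + c%:R) / m%:R /\
  V_n c m n = (T c m n.+2)%:R / (m%:R ^+ 2 * (T c m n)%:R)
              - (T c m n.+1)%:R ^+ 2 / (m%:R ^+ 2 * (T c m n)%:R ^+ 2)
              - 1 / m%:R.
Proof.
have M0_neq0 : moment c m n 0 != 0 by rewrite -T_moment0 pnatr_eq0 -lt0n T_gt0.
have m_neq0 : m%:R != 0 :> rat by rewrite pnatr_eq0 -lt0n.
rewrite V_n_moments E_n_moments !T_moment0 !moment_succ0 // moment_succ1 //.
by split; field; rewrite M0_neq0 m_neq0.
Qed.
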